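(* Let $n\ge 3$. In the Game of Cycles on the $C_n$ board (a cycle graph with $n$ vertices and $n$ edges embedded in the plane, with its single bounded cell), the outcome is determined by the parity of $n$ regardless of how the players play: if $n$ is odd, Player~1 wins, and if $n$ is even, Player~2 wins.
   Context: The Game of Cycles. A board is a simple connected planar graph embedded in the plane, together with its bounded cells. Two players alternate turns; on a turn a player marks one unmarked edge with an arrow pointing along the edge in one of its two directions. Each edge receives at most one arrow, and arrows have the same effect regardless of who placed them. Moves must obey the sink-source rule: no move may create a sink (a vertex all of whose incident edges are marked with arrows pointing toward it) or a source (a vertex all of whose incident edges are marked with arrows pointing away from it). A player who has a legal move must make one. A cycle cell is a bounded cell all of whose boundary edges are marked with arrows all cycling in the same direction around that cell. The first player to create a cycle cell wins; if play ends (no legal move remains) without a cycle cell, the player who made the last move wins. *)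

From mathcomp Require Import all_boot.
Set Implicit Arguments. Unset Strict Implicit. Unset Printing Implicit Defensive.

(* Board C_n: vertices 'I_n; edge e : 'I_n joins vertex e and vertex ordS e
   (= e+1 mod n).  The single bounded cell has all n edges on its boundary.
   A marking is a map edge -> option bool:
     None        = unmarked,
     Some true   = arrow from e to e+1,
     Some false  = arrow from e+1 to e. *)
Definition marking (n : nat) := {ffun 'I_n -> option bool}.

Definition empty_marking (n : nat) : marking n := [ffun _ => None].

(* The two edges incident to vertex v are edge v (to v+1) and edge (v-1). *)
Definition is_sink n (s : marking n) (v : 'I_n) : bool :=
  (s v == Some false) && (s (ord_pred v) == Some true).
Definition is_source n (s : marking n) (v : 'I_n) : bool :=
  (s v == Some true) && (s (ord_pred v) == Some false).

Definition no_sink_source n (s : marking n) : bool :=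
  [forall v, ~~ is_sink s v && ~~ is_source s v].

Definition cycle_cell n (s : marking n) : bool :=
  [forall e, s e == Some true] || [forall e, s e == Some false].

Definition move (n : nat) := ('I_n * bool)%type.

Definition step n (s : marking n) (m : move n) : marking n :=
  [ffun e => if e == m.1 then Some m.2 else s e].

Definition legal n (s : marking n) (m : move n) : bool :=
  (s m.1 == None) && no_sink_source (step s m).

Definition after n (s : marking n) (ms : seq (move n)) : marking n :=
  foldl (@step n) s ms.

Fixpoint valid_play n (s : marking n) (ms : seq (move n)) : bool :=
  match ms with
  | [::] => true
  | m :: ms' => ~~ cycle_cell s && legal s m && valid_play (step s m) ms'
  end.

Definition no_legal_move n (s : marking n) : bool := [forall m : move n, ~~ legal s m].

Definition complete_play n (ms : seq (move n)) : bool :=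
  valid_play (empty_marking n) ms &&
  (cycle_cell (after (empty_marking n) ms) || no_legal_move (after (empty_marking n) ms)).

Inductive player := Player1 | Player2.

(* The player making the k-th move (k >= 1): Player 1 makes odd moves. *)
Definition mover (k : nat) : player := if odd k then Player1 else Player2.

Definition winner n (ms : seq (move n)) : option player :=
  let s := after (empty_marking n) ms in
  if cycle_cell s then Some (mover (size ms))
  else if no_legal_move s then Some (mover (size ms))
  else None.

(* Label every edge by its orientation, an unmarked edge copying the
   orientation of the edge before it.  In a sink- and source-free position
   two consecutive marked edges are oriented alike, and once the game is over
   every unmarked edge lies between marked edges of opposite orientations
   (otherwise one of its two directions would still be legal).  So the
   unmarked edges of the final position are exactly the places where the
   label changes going around the cycle: there is an even number of them.
   Hence the number of moves has the parity of n, and the player who made the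
   last move, who wins in either ending, is Player 1 exactly when n is odd. *)
From mathcomp Require Import all_boot zify.
Set Implicit Arguments. Unset Strict Implicit. Unset Printing Implicit Defensive.

Lemma even_sum_label_changes (T : finType) (f : T -> T) (b : T -> bool) :
  injective f -> ~~ odd (\sum_x (b x != b (f x))).
Proof.
move=> f_inj.
have double_count : \sum_x (b x != b (f x)) + 2 * \sum_x (b x && b (f x))
                    = 2 * \sum_x (b x : nat).
  rewrite big_distrr -big_split /=.
  rewrite (eq_bigr (fun x => b x + b (f x))); last by move=> x _; case: (b x); case: (b (f x)).
  by rewrite big_split /= mul2n -addnn (reindex_inj f_inj).
by move/(congr1 odd): double_count; rewrite oddD !oddM /= addbF => ->.
Qed.

Section CycleBoard.

Variable n : nat.
Implicit Types (s : marking n) (e : 'I_n) (ms : seq (move n)).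

Definition unmarked s : nat := \sum_e (s e == None : nat).

Lemma unmarked_empty : unmarked (empty_marking n) = n.
Proof.
rewrite /unmarked (eq_bigr (fun _ => 1)); last by move=> e _; rewrite ffunE.
by rewrite sum_nat_const card_ord muln1.
Qed.

Lemma unmarked_step s (m : move n) :
  s m.1 = None -> unmarked (step s m) + 1 = unmarked s.
Proof.
move=> s_m; rewrite /unmarked (bigD1 m.1) //= [RHS](bigD1 m.1) //= ffunE eqxx s_m.
rewrite add0n addnC; congr (_ + _).
by apply: eq_bigr => e /negbTE e_m; rewrite ffunE e_m.
Qed.

Lemma valid_play_unmarked s ms :
  valid_play s ms -> unmarked (after s ms) + size ms = unmarked s.
Proof.
elim: ms s => [|m ms IH] s /=; first by rewrite addn0.
case/andP=> /andP[_ /andP[/eqP s_m _]] play_ms.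
by rewrite -(unmarked_step s_m) -(IH _ play_ms) addnS addn1.
Qed.

Lemma no_sink_source_empty : no_sink_source (empty_marking n).
Proof. by apply/forallP => v; rewrite /is_sink /is_source !ffunE. Qed.

Lemma valid_play_no_sink_source s ms :
  no_sink_source s -> valid_play s ms -> no_sink_source (after s ms).
Proof.
elim: ms s => [|m ms IH] s //= _.
by case/andP=> /andP[_ /andP[_ ns_m]]; apply: IH.
Qed.

Definition edge_label s e : bool :=
  if s e is Some c then c else s (ord_pred e) == Some true.

Lemma game_over_stuck s e c :
  cycle_cell s || no_legal_move s -> s e = None -> ~~ legal s (e, c).
Proof.
case/orP=> [/orP[] /forallP/(_ e)| /forallP/(_ (e, c)) //]; by move=> /eqP->.
Qed.

Hypothesis n_gt1 : 1 < n.

Lemma ordS_neq e : ordS e != e.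
Proof.
apply/eqP => /(congr1 val) /=; have e_lt := ltn_ord e.
case: (ltnP e.+1 n) => [succ_lt | n_le]; first by rewrite modn_small //; lia.
have -> : e.+1 = n by lia.
by rewrite modnn; lia.
Qed.

Lemma ord_pred_neq e : ord_pred e != e.
Proof. by apply/eqP => pred_e; have := ordS_neq e; rewrite -{1}pred_e ord_predK eqxx. Qed.

Lemma legal_mark s e c :
  s e = None -> no_sink_source s ->
  s (ord_pred e) != Some (~~ c) -> s (ordS e) != Some (~~ c) -> legal s (e, c).
Proof.
move=> s_e ns pred_ok succ_ok; rewrite /legal /= s_e; apply/forallP => v.
rewrite /is_sink /is_source !ffunE /=.
case: (eqVneq v e) => [->|v_e].
  by rewrite (negbTE (ord_pred_neq e)); case: c pred_ok {succ_ok} => /=;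
     case: (s (ord_pred e)) => [[]|].
case: (eqVneq (ord_pred v) e) => [pred_v|_]; last exact: (forallP ns v).
have -> : v = ordS e by rewrite -pred_v ord_predK.
by case: c succ_ok {pred_ok} => /=; case: (s (ordS e)) => [[]|].
Qed.

Lemma edge_label_marked s e :
  no_sink_source s -> s e != None -> edge_label s (ordS e) = edge_label s e.
Proof.
move=> ns; rewrite /edge_label ordSK; case s_e: (s e) => [c|] // _.
case s_succ: (s (ordS e)) => [c'|]; last by case: c s_e.
move/forallP/(_ (ordS e)): ns; rewrite /is_sink /is_source ordSK s_e s_succ.
by case: c c' {s_e s_succ} => -[].
Qed.

Lemma edge_label_stuck s e :
  no_sink_source s -> s e = None -> (forall c, ~~ legal s (e, c)) ->
  edge_label s (ordS e) = ~~ edge_label s e.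
Proof.
move=> ns s_e stuck; rewrite /edge_label ordSK s_e.
have /negP stuck_true := stuck true; have /negP stuck_false := stuck false.
have legal_true := legal_mark (c := true) s_e ns.
have legal_false := legal_mark (c := false) s_e ns.
case: (s (ord_pred e)) legal_true legal_false => [[]|];
  case: (s (ordS e)) => [[]|] //= legal_true legal_false; exfalso;
  first [exact: stuck_true (legal_true _ _) | exact: stuck_false (legal_false _ _)].
Qed.

Lemma game_over_unmarked_even s :
  no_sink_source s -> cycle_cell s || no_legal_move s -> ~~ odd (unmarked s).
Proof.
move=> ns over.
suff -> : unmarked s = \sum_e (edge_label s e != edge_label s (ordS e)).
  exact/even_sum_label_changes/ordS_inj.
apply: eq_bigr => e _; case: (eqVneq (s e) None) => [s_e|s_e].
  rewrite (edge_label_stuck ns s_e); first by case: edge_label.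
  by move=> c; apply: game_over_stuck.
by rewrite (edge_label_marked ns s_e) eqxx.
Qed.

Lemma complete_play_size ms : complete_play ms -> odd (size ms) = odd n.
Proof.
case/andP=> play_ms over.
have ns := valid_play_no_sink_source no_sink_source_empty play_ms.
have := congr1 odd (valid_play_unmarked play_ms).
by rewrite unmarked_empty oddD (negbTE (game_over_unmarked_even ns over)).
Qed.

End CycleBoard.

Lemma winner_complete_play n (ms : seq (move n)) :
  complete_play ms -> winner ms = Some (mover (size ms)).
Proof.
case/andP=> _; rewrite /winner.
by case: (cycle_cell _) => //; case: (no_legal_move _).
Qed.

Theorem theorem4p3 (n : nat) (hn : 3 <= n) (ms : seq (move n)) :
  complete_play ms ->
  winner ms = Some (if odd n then Player1 else Player2).
Proof.
move=> complete.
by rewrite winner_complete_play // /mover (complete_play_size (ltnW hn) complete).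
Qed.
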